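(* For all real $x\ge2$, $x^{-2}+x^{-2/x}<1$. *)

From Stdlib Require Import Reals.

(** Write [x^(-2/x) = exp (-u)] with [u = 2 ln x / x]. Since [exp u > 1 + u],
    it suffices that [1/x^2 + 1/(1+u) <= 1], i.e. [(x^2 - 1) u >= 1]; and for
    [x >= 2] we have [ln x >= ln 2 > 1/2], so [(x^2 - 1) u > (x^2 - 1)/x >= 3/2]. *)
From Stdlib Require Import Reals Lra Psatz.
Open Scope R_scope.

Lemma exp_neg_lt_inv (v : R) : 0 < v -> exp (- v) < / (1 + v).
Proof.
  intros Hv; rewrite exp_Ropp.
  apply Rinv_lt_contravar.
  - apply Rmult_lt_0_compat; [lra | apply exp_pos].
  - apply exp_ineq1; lra.
Qed.

Lemma Rpower_neg_lt_inv (x a : R) :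
  0 < a * ln x -> Rpower x (- a) < / (1 + a * ln x).
Proof.
  intros Hv; unfold Rpower.
  replace (- a * ln x) with (- (a * ln x)) by ring.
  now apply exp_neg_lt_inv.
Qed.

Lemma Rpower_neg2 (x : R) : 0 < x -> Rpower x (-2) = / (x * x).
Proof.
  intros Hx.
  replace (-2) with (- INR 2) by (simpl; ring).
  rewrite Rpower_Ropp, Rpower_pow by exact Hx.
  simpl; now rewrite Rmult_1_r.
Qed.

Lemma ln_gt_half (x : R) : 2 <= x -> / 2 < ln x.
Proof.
  intros Hx; pose proof ln_lt_2.
  destruct (Req_dec x 2) as [-> | Hne]; [lra |].
  pose proof (ln_increasing 2 x ltac:(lra) ltac:(lra)); lra.
Qed.

Lemma inv_add_inv_lt_1 (y u : R) :
  1 < y -> 0 < u -> 1 < (y - 1) * u -> / y + / (1 + u) < 1.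
Proof.
  intros Hy Hu Hyu.
  apply Rmult_lt_reg_r with (y * (1 + u)); [nra |].
  rewrite Rmult_plus_distr_r, Rmult_1_l.
  replace (/ y * (y * (1 + u))) with (1 + u) by (field; lra).
  replace (/ (1 + u) * (y * (1 + u))) with y by (field; lra).
  nra.
Qed.

Theorem mainTheorem14 (x : R) (hx : 2 <= x) :
  Rpower x (-2) + Rpower x (-2 / x) < 1.
Proof.
  assert (Hx : 0 < x) by lra.
  pose proof (ln_gt_half x hx) as HL.
  set (u := 2 / x * ln x).
  assert (Hu : 0 < u) by (unfold u; apply Rmult_lt_0_compat;
                          [apply Rdiv_lt_0_compat |]; lra).
  assert (Hgrow : 1 < (x * x - 1) * u).
  { replace ((x * x - 1) * u) with (2 * ln x * (x - / x)) by (unfold u; field; lra).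
    assert (/ x <= / 2) by (apply Rinv_le_contravar; lra).
    nra. }
  replace (-2 / x) with (- (2 / x)) by (field; lra).
  rewrite Rpower_neg2 by exact Hx.
  pose proof (Rpower_neg_lt_inv x (2 / x) Hu) as Hexp; fold u in Hexp.
  pose proof (inv_add_inv_lt_1 (x * x) u ltac:(nra) Hu Hgrow).
  lra.
Qed.
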